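(* Let $C$ be a real $n\times n$ matrix with nonnegative entries. Then there exist real $n\times n$ matrices $A$ and $B$ with $A$ having nonnegative entries such that $C=AB-BA$ if and only if $\operatorname{tr}(C)=0$.
   Context: Real $n\times n$ matrices are ordered entrywise; a matrix is positive ($\geq 0$) if all its entries are nonnegative. $\operatorname{tr}$ denotes the trace. *)

From HB Require Import structures.
From mathcomp Require Import all_boot all_order all_algebra.
From mathcomp Require Import Rstruct.
Set Implicit Arguments. Unset Strict Implicit. Unset Printing Implicit Defensive.
Import Order.TTheory GRing.Theory Num.Theory.
Local Open Scope ring_scope.

Definition mx_nonneg (n : nat) (A : 'M[Rdefinitions.R]_n) : Prop :=
  forall i j : 'I_n, 0 <= A i j.

From mathcomp Require Import all_boot all_order all_algebra.
From mathcomp Require Import Rstruct.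
Import GRing.Theory Num.Theory.
Local Open Scope ring_scope.

(* Commutators are traceless. Conversely, a nonnegative traceless matrix has
   zero diagonal, and a zero-diagonal C equals D B - B D for the nonnegative
   diagonal D = diag(0, 1, ..., n-1) and B i j = C i j / (i - j). *)

Lemma mxtrace_commutator (R : comNzRingType) (n : nat) (A B : 'M[R]_n) :
  \tr (A *m B - B *m A) = 0.
Proof. by rewrite linearB /= mxtrace_mulC subrr. Qed.

Lemma nonneg_mxtrace_eq0_diag (R : numDomainType) (n : nat) (C : 'M[R]_n) :
  (forall i j, 0 <= C i j) -> \tr C = 0 -> forall i, C i i = 0.
Proof.
move=> C_ge0 trC0 i.
by apply: (psumr_eq0P (P := xpredT) (F := fun k => C k k)) => // k _.
Qed.

Definition index_diag_mx (R : nzRingType) (n : nat) : 'M[R]_n :=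
  diag_mx (\row_i i%:R).

Lemma index_diag_mx_ge0 (R : numDomainType) (n : nat) (i j : 'I_n) :
  0 <= index_diag_mx R n i j.
Proof. by rewrite !mxE mulrn_wge0. Qed.

Lemma zero_diag_commutator (R : numFieldType) (n : nat) (C : 'M[R]_n) :
  (forall i, C i i = 0) ->
  C = index_diag_mx R n *m \matrix_(i, j) (C i j / (i%:R - j%:R))
      - \matrix_(i, j) (C i j / (i%:R - j%:R)) *m index_diag_mx R n.
Proof.
move=> diagC0; apply/matrixP => i j.
rewrite mul_diag_mx mul_mx_diag !mxE.
have [<-|neq_ij] := eqVneq i j; first by rewrite diagC0 !mul0r mulr0 subrr.
have ij_neq0 : (i%:R - j%:R : R) != 0.
  by rewrite subr_eq0 eqr_nat; apply: contra neq_ij => /eqP/val_inj->.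
by rewrite [X in _ - X]mulrC -mulrBl mulrC divfK.
Qed.

Theorem proposition4p3 (n : nat) (C : 'M[Rdefinitions.R]_n) :
  mx_nonneg C ->
  ((exists A B : 'M[Rdefinitions.R]_n, mx_nonneg A /\ C = A *m B - B *m A)
   <-> \tr C = 0).
Proof.
move=> C_ge0; split; first by move=> [A [B [_ ->]]]; exact: mxtrace_commutator.
move=> trC0.
exists (index_diag_mx _ n), (\matrix_(i, j) (C i j / (i%:R - j%:R))).
split; first exact: index_diag_mx_ge0.
by apply: zero_diag_commutator; exact: nonneg_mxtrace_eq0_diag.
Qed.
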